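(* Let $n\ge 2$ be an integer and let $A$ be a Bernstein set of $(L_n,\tau_E|_{L_n})$. Then $(X_n,\tau(A))$ is Lindelöf but not perfect.
   Context: For $\overline{x},\overline{a}\in\mathbb R^n$ let $|\overline{x}-\overline{a}|$ be the Euclidean distance and $B(\overline{a},\epsilon)=\{\overline{x}\in\mathbb R^n:|\overline{x}-\overline{a}|<\epsilon\}$. Let $P_n=\{\overline{x}\in\mathbb R^n: x_n>0\}$, $L_n=\{\overline{x}\in\mathbb R^n: x_n=0\}$, $X_n=P_n\cup L_n$, and let $\tau_E$ denote the Euclidean topology on $X_n$ (so $(L_n,\tau_E|_{L_n})$ is homeomorphic to $\mathbb R^{n-1}$). For $\overline{a}\in L_n$ and $\epsilon>0$ put $\overline{a(\epsilon)}=(a_1,\dots,a_{n-1},\epsilon)$ and $\tilde B(\overline{a},\epsilon)=\{\overline{a}\}\cup B(\overline{a(\epsilon)},\epsilon)$. For $A\subseteq L_n$, the topology $\tau(A)$ on $X_n$ is generated by the local bases: at $\overline{a}\in P_n$, the sets $B(\overline{a},\epsilon)$ with $0<\epsilon<a_n$; at $\overline{a}\in A$, the sets $B(\overline{a},\epsilon)\cap X_n$ with $\epsilon>0$; at $\overline{a}\in L_n\setminus A$, the sets $\tilde B(\overline{a},\epsilon)$ with $\epsilon>0$. A subset $A$ of $(L_n,\tau_E|_{L_n})$ is a Bernstein set if both $A$ and $L_n\setminus A$ intersect every uncountable compact subset of $(L_n,\tau_E|_{L_n})$. A space is perfect if every closed set is a $G_\delta$-set. *)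

From HB Require Import structures.
From mathcomp Require Import all_boot all_order all_algebra.
From mathcomp Require Import all_classical all_reals all_analysis.
Set Implicit Arguments. Unset Strict Implicit. Unset Printing Implicit Defensive.
Import Order.TTheory GRing.Theory Num.Theory.
Import numFieldNormedType.Exports.
Local Open Scope classical_set_scope.
Local Open Scope ring_scope.

Section Defs.
Variables (R : realType) (n : nat).

(* points of R^n are row vectors; coordinate k (0-based, so x_{k+1} in the paper) *)
Definition pt := 'rV[R]_n.

Definition coord (x : pt) (k : nat) : R :=
  odflt 0 (omap (fun i : 'I_n => x ord0 i) (insub k)).

Definition lastc (x : pt) : R := coord x n.-1.

Definition edist (x a : pt) : R :=
  Num.sqrt (\sum_(i < n) (x ord0 i - a ord0 i) ^+ 2).

Definition eball (a : pt) (eps : R) : set pt := [set x | edist x a < eps].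

Definition Pn : set pt := [set x | 0 < lastc x].
Definition Ln : set pt := [set x | lastc x = 0].
Definition Xn : set pt := Pn `|` Ln.

Definition a_eps (a : pt) (eps : R) : pt :=
  \row_(i < n) (if (i : nat) == n.-1 then eps else a ord0 i).

Definition tball (a : pt) (eps : R) : set pt := [set a] `|` eball (a_eps a eps) eps.

Definition tau_basic (A : set pt) (a : pt) (U : set pt) : Prop :=
  exists eps : R, 0 < eps /\
    [\/ Pn a /\ eps < lastc a /\ U = eball a eps,
        A a /\ U = eball a eps `&` Xn
      | (Ln `\` A) a /\ U = tball a eps].

Definition tau_open (A : set pt) (U : set pt) : Prop :=
  U `<=` Xn /\ forall a, U a -> exists V, tau_basic A a V /\ V `<=` U.

Definition tau_closed (A : set pt) (F : set pt) : Prop :=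
  F `<=` Xn /\ tau_open A (Xn `\` F).

Definition tau_Gdelta (A : set pt) (F : set pt) : Prop :=
  exists G : nat -> set pt, (forall k, tau_open A (G k)) /\ F = \bigcap_k G k.

Definition tau_Lindelof (A : set pt) : Prop :=
  forall C : set (set pt), (forall U, C U -> tau_open A U) ->
    Xn `<=` \bigcup_(U in C) U ->
    exists D : set (set pt), [/\ D `<=` C, countable D & Xn `<=` \bigcup_(U in D) U].

Definition tau_perfect (A : set pt) : Prop :=
  forall F, tau_closed A F -> tau_Gdelta A F.

(* A subset of L_n is compact in the
   subspace topology iff it is compact in R^n (library topology of 'rV[R]_n,
   which is the Euclidean topology). *)
Definition Bernstein (A : set pt) : Prop :=
  A `<=` Ln /\
  forall K : set pt, K `<=` Ln -> compact K -> ~ countable K ->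
    K `&` A !=set0 /\ K `&` (Ln `\` A) !=set0.

End Defs.

(* Every Euclidean-closed subset of L_n that misses the Bernstein set A is
   countable, being a countable union of compact sets none of which can be
   uncountable.  Around each point of P_n or of A, a tau(A)-open set contains
   the trace on X_n of a Euclidean ball.  Hence a tau(A)-open cover of X_n is
   refined by countably many rational balls, except at the points of a closed
   subset of L_n missing A, of which there are only countably many: X_n is
   Lindelöf.  The set A itself is tau(A)-closed.  If it were the intersection
   of tau(A)-open sets G_k, each G_k would contain a Euclidean neighbourhood
   W_k of A, and L_n \ A would lie in the union of the countable sets
   L_n \ W_k.  But L_n \ A is uncountable: L_n contains a line, hence, by
   inner regularity of Lebesgue measure, an uncountable compact set avoiding
   any given countable set, and such a compact set meets L_n \ A. *)

From Pilot Require Import Defs.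
From HB Require Import structures.
From mathcomp Require Import all_boot all_order all_algebra.
From mathcomp Require Import all_classical all_reals all_analysis.
From mathcomp Require Import ring lra measurable_realfun.
Set Implicit Arguments. Unset Strict Implicit. Unset Printing Implicit Defensive.
Import Order.TTheory GRing.Theory Num.Theory.
Import numFieldNormedType.Exports.
Local Open Scope classical_set_scope.
Local Open Scope ring_scope.

Lemma countableU T (X Y : set T) : countable X -> countable Y -> countable (X `|` Y).
Proof.
move=> cX cY; have -> : X `|` Y = \bigcup_(b in [set: bool]) (if b then X else Y).
  by apply/seteqP; split=> [z [Xz|Yz]|z [[] _ ?]]; [exists true|exists false|left|right].
by apply: bigcup_countable => // -[].
Qed.

Lemma countable_refinement T I (C : set (set T)) (J : set I) (K : I -> set T) :
  countable J -> (forall i, J i -> exists2 U, C U & K i `<=` U) ->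
  exists2 D, D `<=` C /\ countable D & \bigcup_(i in J) K i `<=` \bigcup_(U in D) U.
Proof.
move=> cJ JC.
have [sel selP] : {sel : I -> set T & forall i, J i -> C (sel i) /\ K i `<=` sel i}.
  apply: (@choice _ _ (fun i U => J i -> C U /\ K i `<=` U)) => i.
  have [/JC[U CU KU]|nJi] := pselect (J i); first by exists U.
  by exists set0.
exists (sel @` J); first split.
- by move=> _ [i Ji <-]; exact: (selP i Ji).1.
- exact: sub_countable (card_image_le _ _) cJ.
- by move=> x [i Ji Kx]; exists (sel i); [exists i | exact: (selP i Ji).2].
Qed.

Section compact_avoiding.
Variable R : realType.
Local Notation mu := (@lebesgue_measure R).

Lemma uncountable_compact_avoiding (E : set R) : countable E ->
  exists V : set R, [/\ compact V, ~ countable V & V `<=` ~` E].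
Proof.
move=> cE; pose I := `[(0:R), 1]%classic; pose M := I `\` E.
have mE : measurable E := countable_measurable (fun t => measurable_set1 t) cE.
have mI : measurable I by exact: measurable_itv.
have mM : measurable M by exact: measurableD.
have muI : mu I = 1%E by rewrite lebesgue_measure_itv /= lte_fin ltr01 /= oppr0 adde0.
have muM_fin : (mu M < +oo)%E.
  apply: (@le_lt_trans _ _ (mu I)); last by rewrite muI ltry.
  by apply: le_measure; rewrite ?inE // => t [].
have [V [cV VM muMV]] := lebesgue_regularity_inner mM muM_fin (@ltr01 R).
exists V; split => // [cntV|t /VM [] //].
have mV : measurable V := compact_measurable cV.
have IE : I `<=` (M `\` V `|` V) `|` E.
  move=> t It; have [Et|nEt] := pselect (E t); first by right.
  by left; have [Vt|nVt] := pselect (V t); [right | left].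
have : (mu I <= mu (M `\` V) + mu V + mu E)%E.
  have mMVV : measurable (M `\` V `|` V) by apply: measurableU => //; exact: measurableD.
  have mMVVE : measurable (M `\` V `|` V `|` E) by exact: measurableU.
  apply: le_trans (le_measure mu (mem_set mI) (mem_set mMVVE) IE) _.
  apply: le_trans (measureU2 _ _ _) _ => //.
  by rewrite leeD2r // measureU2 //; exact: measurableD.
rewrite (countable_lebesgue_measure0 cntV) (countable_lebesgue_measure0 cE) !adde0 muI.
by move=> /le_lt_trans/(_ muMV); rewrite ltxx.
Qed.

End compact_avoiding.

Lemma uncountable_compact_avoiding_image (R : realType) (T : topologicalType)
    (f : R -> T) (D : set T) :
  continuous f -> injective f -> countable D ->
  exists K : set T, [/\ K `<=` range f, compact K, ~ countable K & K `<=` ~` D].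
Proof.
move=> fC finj cD.
have cE : countable (f @^-1` D) by exact: sub_countable (@card_ge_preimage _ _ D f (in2W finj)) cD.
have [V [cV ncV VE]] := uncountable_compact_avoiding cE.
exists (f @` V); split.
- by move=> _ [t _ <-]; exists t.
- by apply: continuous_compact cV; apply: continuous_subspaceT.
- by rewrite (eq_countable (inj_card_eq (in2W finj))).
- by move=> _ [t Vt <-]; exact: VE.
Qed.

Section euclidean.
Variables (R : realType) (n : nat).
Implicit Types (x y a : 'rV[R]_n).
Local Notation Pn := (@Pn R n).
Local Notation Ln := (@Ln R n).

Lemma rV_ballP (x y : 'rV[R]_n) r : 0 < r ->
  ball x r y <-> forall j, `|x ord0 j - y ord0 j| < r.
Proof.
move=> r0; split; first by move=> [_ xy] j; exact: xy ord0 j.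
by move=> xy; split => // i j; rewrite (ord1 i); exact: xy.
Qed.

Lemma rat_ball_approx (x : 'rV[R]_n) (d : R) : 0 < d -> exists q : 'rV[rat]_n * rat,
  [/\ 0 < ratr q.2 :> R, ball (map_mx (@ratr R) q.1) (ratr q.2) x &
      ball (map_mx (@ratr R) q.1) (ratr q.2) `<=` ball x d].
Proof.
move=> d0.
have [r] : exists r : rat, ratr r \in `](d / 3), (d / 2)[ by apply: rat_in_itvoo; lra.
rewrite in_itv /= => /andP [r1 r2].
have /choice[c cP] : forall i, exists c : rat,
    ratr c \in `](x ord0 i - d / 3), (x ord0 i + d / 3)[.
  by move=> i; apply: rat_in_itvoo; lra.
have r0 : 0 < ratr r :> R by lra.
exists (\row_i c i, r); split => //=.
- apply/rV_ballP => // j; rewrite !mxE; move: (cP j); rewrite in_itv /=.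
  by rewrite ltr_norml => /andP [? ?]; apply/andP; split; lra.
- move=> y /(rV_ballP _ _ r0) cy; apply/rV_ballP => // j.
  move: (cy j) (cP j); rewrite !mxE in_itv /= !ltr_norml => /andP [? ?] /andP [? ?].
  by apply/andP; split; lra.
Qed.

Lemma coord_le_edist x a i : `|x ord0 i - a ord0 i| <= Defs.edist x a.
Proof.
rewrite /Defs.edist -sqrtr_sqr ler_sqrt; last by rewrite sumr_ge0 // => j _; rewrite sqr_ge0.
by rewrite (bigD1 i) //= lerDl sumr_ge0 // => j _; exact: sqr_ge0.
Qed.

Hypothesis n_gt0 : (0 < n)%N.

Lemma ball_sub_eball a eps : 0 < eps -> ball a (eps / n%:R) `<=` eball a eps.
Proof.
move=> eps0 y; have n0 : 0 < n%:R :> R by rewrite ltr0n.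
have d0 : 0 < eps / n%:R by rewrite divr_gt0.
move=> /(rV_ballP _ _ d0) ay; rewrite /eball /Defs.edist /=.
rewrite -[eps]gtr0_norm // -sqrtr_sqr ltr_sqrt ?exprn_gt0 //.
apply: (@lt_le_trans _ _ (\sum_(i < n) (eps / n%:R) ^+ 2)).
  apply: ltr_sum => [|i _]; first by apply/hasP; exists (Ordinal n_gt0); rewrite ?mem_index_enum.
  by move: (ay i); rewrite ltr_norml => /andP [? ?]; nra.
rewrite sumr_const card_ord -[_ *+ n]mulr_natr.
have -> : (eps / n%:R) ^+ 2 * n%:R = eps ^+ 2 / n%:R by field; rewrite gt_eqF.
by rewrite ler_pdivrMr // ler_peMr ?sqr_ge0 // ler1n.
Qed.

Let lt_last : (n.-1 < n)%N. Proof. by rewrite ltn_predL. Qed.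
Let ilast : 'I_n := Ordinal lt_last.

Lemma lastcE x : lastc x = x ord0 ilast.
Proof.
rewrite /lastc /Defs.coord; case: (@insubP _ _ 'I_n n.-1) => [j _ jE /=|]; last by rewrite lt_last.
by rewrite (_ : j = ilast) //; apply: val_inj.
Qed.

Lemma lastc_a_eps a eps : lastc (a_eps a eps) = eps.
Proof. by rewrite lastcE mxE eqxx. Qed.

Lemma eball_sub_Pn a r : r <= lastc a -> eball a r `<=` Pn.
Proof.
rewrite lastcE => ra y /(le_lt_trans (coord_le_edist y a ilast)).
by rewrite /Pn /= lastcE ltr_norml => /andP [? _]; lra.
Qed.

Lemma Pn_not_Ln x : Pn x -> ~ Ln x.
Proof. by rewrite /Pn /Ln /= => + Lx; rewrite Lx ltxx. Qed.

Lemma closed_Ln : closed Ln.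
Proof.
have -> : Ln = (fun x : 'rV[R]_n => x ord0 ilast) @^-1` [set 0].
  by apply/seteqP; split => x /=; rewrite /Ln /= lastcE.
by apply: preimage_closed; [move=> x _; exact: coord_continuous | exact: closed_eq].
Qed.

End euclidean.

Section line_in_Ln.
Variables (R : realType) (n : nat).
Hypothesis n_gt1 : (1 < n)%N.

Lemma Ln_compact_avoiding (D : set (pt R n)) : countable D ->
  exists K, [/\ K `<=` @Ln R n, compact K, ~ countable K & K `<=` ~` D].
Proof.
move=> cD; pose e0 : 'rV[R]_n := \row_(i < n) ((i : nat) == 0%N)%:R.
have e0_inj : injective (fun t : R => t *: e0).
  move=> s t /(congr1 (fun v : 'rV[R]_n => v ord0 (Ordinal (ltnW n_gt1)))).
  by rewrite !mxE /= !mulr1.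
have [K [Ke0 cK ncK KD]] :=
  uncountable_compact_avoiding_image (@scalel_continuous _ _ e0) e0_inj cD.
exists K; split => // _ /Ke0[t _ <-]; rewrite /Ln /= (lastcE (ltnW n_gt1)) !mxE /=.
by case: n n_gt1 => [|[|k]] //= _; rewrite mulr0.
Qed.

End line_in_Ln.

Section tau_topology.
Variables (R : realType) (n : nat) (A : set (pt R n)).
Hypothesis n_gt0 : (0 < n)%N.
Local Notation Pn := (@Pn R n).
Local Notation Ln := (@Ln R n).
Local Notation Xn := (@Xn R n).

Lemma tau_open_ball U x : tau_open A U -> U x -> Pn x \/ A x ->
  exists2 d, 0 < d & ball x d `&` Xn `<=` U.
Proof.
move=> [_ Uopen] Ux PAx.
have d0 (eps : R) : 0 < eps -> 0 < eps / n%:R by move=> eps0; rewrite divr_gt0 ?ltr0n.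
have [V [[eps [eps0 [[_ [_ ->]]|[_ ->]|[[Lx nAx] _]]]] VU]] := Uopen x Ux.
- exists (eps / n%:R); first exact: d0.
  by move=> y [xy _]; apply/VU/(ball_sub_eball n_gt0).
- exists (eps / n%:R); first exact: d0.
  by move=> y [xy Xy]; apply: VU; split => //; exact: (ball_sub_eball n_gt0).
- by case: PAx => // /Pn_not_Ln.
Qed.

Definition ball_core (U : set (pt R n)) : set (pt R n) :=
  \bigcup_(c in [set c : pt R n * R | 0 < c.2 /\ ball c.1 c.2 `&` Xn `<=` U])
    ball c.1 c.2.

Lemma open_ball_core U : open (ball_core U).
Proof. by apply: bigcup_open => c [c0 _]; exact: ball_open. Qed.

Lemma ball_coreI_Xn U : ball_core U `&` Xn `<=` U.
Proof. by move=> x [[c [_ cU] cx] Xx]; exact: cU. Qed.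

Lemma tau_open_sub_ball_core U : tau_open A U -> U `&` (Pn `|` A) `<=` ball_core U.
Proof.
move=> Uopen x [Ux PAx]; have [d d0 dU] := tau_open_ball Uopen Ux PAx.
by exists (x, d) => //=; exact: ballxx.
Qed.

Lemma tau_closed_of_sub_Ln : A `<=` Ln -> tau_closed A A.
Proof.
move=> AL; split; first by move=> x /AL; right.
split; first by move=> x [].
have PnA : Pn `<=` Xn `\` A by move=> y Py; split; [left | move=> /AL; exact: Pn_not_Ln].
move=> x [[Px|Lx] nAx].
- have /andP[x0 x2] : 0 < lastc x / 2 < lastc x by rewrite /Pn /= in Px; apply/andP; split; lra.
  exists (eball x (lastc x / 2)); split; last exact: subset_trans (eball_sub_Pn n_gt0 (ltW x2)) PnA.
  by exists (lastc x / 2); split => //; apply: Or31.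
- exists (tball x 1); split; first by exists 1; split => //; apply: Or33.
  have Pn_ball : eball (a_eps x 1) 1 `<=` Pn by apply: eball_sub_Pn; rewrite ?lastc_a_eps.
  by move=> y [->|/Pn_ball/PnA //]; split => //; right.
Qed.

End tau_topology.

Section Bernstein.
Variables (R : realType) (n : nat) (A : set (pt R n)).
Hypothesis hA : Bernstein A.
Local Notation Pn := (@Pn R n).
Local Notation Ln := (@Ln R n).
Local Notation Xn := (@Xn R n).

Lemma Bernstein_Ln_setD_countable (W : set (pt R n)) :
  (0 < n)%N -> open W -> A `<=` W -> countable (Ln `\` W).
Proof.
move=> n_gt0 oW AW.
pose box (m : nat) := [set v : 'rV[R]_n | forall i, `[- (m%:R : R), m%:R]%classic (v ord0 i)].
have box_compact m : compact (box m).
  by apply: (@rV_compact _ _ (fun=> `[- (m%:R : R), m%:R]%classic)) => i; exact: segment_compact.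
have closedS : closed (Ln `\` W) by apply: closedI (closed_Ln n_gt0) _; exact: open_closedC.
have -> : Ln `\` W = \bigcup_(m in [set: nat]) (box m `&` (Ln `\` W)).
  apply/seteqP; split => [x Sx|x [m _ [_ Sx]] //].
  have s0 : 0 <= \sum_i `|x ord0 i| by apply: sumr_ge0.
  exists (Num.Def.archi_bound (\sum_i `|x ord0 i|)) => //; split => // i /=.
  rewrite in_itv /= -ler_norml; apply: le_trans (ltW (archi_boundP s0)).
  by rewrite (bigD1 i) //= lerDl sumr_ge0.
apply: bigcup_countable => // m _; apply: contrapT => ncount.
have KL : box m `&` (Ln `\` W) `<=` Ln by move=> y [_ []].
have [[y [[_ [_ nWy]] Ay]] _] :=
  hA.2 _ KL (compact_closedI (box_compact m) closedS) ncount.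
exact: nWy (AW y Ay).
Qed.

Lemma Bernstein_Ln_setD_uncountable : (1 < n)%N -> ~ countable (Ln `\` A).
Proof.
move=> n_gt1 cLA; have [K [KL cK ncK KD]] := Ln_compact_avoiding n_gt1 cLA.
by have [_ [y [Ky LAy]]] := hA.2 K KL cK ncK; exact: KD y Ky LAy.
Qed.

Lemma Bernstein_tau_Lindelof : (0 < n)%N -> tau_Lindelof A.
Proof.
move=> n_gt0 C Copen XnC.
pose B (q : 'rV[rat]_n * rat) : set (pt R n) := ball (map_mx (@ratr R) q.1) (ratr q.2).
pose good q := 0 < ratr q.2 :> R /\ exists2 U, C U & B q `&` Xn `<=` U.
pose W := \bigcup_(q in good) B q.
have PnAW : Pn `|` A `<=` W.
  move=> x PAx; have Xx : Xn x by case: PAx => [Px|/hA.1 Lx]; [left|right].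
  have [U CU Ux] := XnC x Xx.
  have [d d0 dU] := tau_open_ball n_gt0 (Copen U CU) Ux PAx.
  have [q [q0 qx qd]] := rat_ball_approx x d0.
  by exists q => //; split => //; exists U => // y [/qd By Xy]; exact: dU.
have cS : countable (Ln `\` W).
  apply: Bernstein_Ln_setD_countable => //; last by move=> x Ax; apply: PnAW; right.
  by apply: bigcup_open => q [q0 _]; exact: ball_open.
have [|D1 [D1C cD1] D1cover] := countable_refinement (C := C)
    (K := fun q => B q `&` Xn) (countableP good).
  by move=> q [].
have [|D2 [D2C cD2] D2cover] := countable_refinement (C := C) (K := set1) cS.
  by move=> x [Lx _]; have [U CU Ux] := XnC x (or_intror Lx); exists U => // _ ->.
exists (D1 `|` D2); split; [by move=> U [/D1C|/D2C] | exact: countableU | ].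
move=> x Xx; have [[q gq Bqx]|nWx] := pselect (W x).
  by have [U D1U Ux] := D1cover x (ex_intro2 _ _ q gq (conj Bqx Xx)); exists U; [left|].
have Sx : (Ln `\` W) x.
  by split => //; case: Xx => // Px; exfalso; apply/nWx/PnAW; left.
by have [U D2U Ux] := D2cover x (ex_intro2 _ _ x Sx erefl); exists U; [right|].
Qed.

Lemma Bernstein_not_tau_perfect : (1 < n)%N -> ~ tau_perfect A.
Proof.
move=> n_gt1 perfect; have n_gt0 : (0 < n)%N := ltnW n_gt1.
have [G [Gopen AG]] := perfect A (tau_closed_of_sub_Ln n_gt0 hA.1).
apply: (Bernstein_Ln_setD_uncountable n_gt1).
have LAsub : Ln `\` A `<=` \bigcup_(k in [set: nat]) (Ln `\` ball_core (G k)).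
  move=> x [Lx nAx]; apply: contrapT => nsub; apply: nAx; rewrite AG => k _.
  apply: ball_coreI_Xn; split; last by right.
  by apply: contrapT => nGk; apply: nsub; exists k.
apply: sub_countable (subset_card_le LAsub) _; apply: bigcup_countable => // k _.
apply: Bernstein_Ln_setD_countable => //; first exact: open_ball_core.
move=> a Aa; apply: (tau_open_sub_ball_core n_gt0 (Gopen k)); split; last by right.
by move: Aa; rewrite AG => /(_ k I).
Qed.

End Bernstein.

Theorem mainTheorem18 (R : realType) (n : nat) (hn : (2 <= n)%N)
  (A : set (pt R n)) (hA : Bernstein A) :
  tau_Lindelof A /\ ~ tau_perfect A.
Proof.
split; first exact: Bernstein_tau_Lindelof (ltnW hn).
exact: Bernstein_not_tau_perfect.
Qed.
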